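(* For any quiver $G$, the explosion $X(G)$ equipped with the covering map $p_G : X(G)\to G$ is the epi-projective cover of $G$; that is, $X(G)$ is epi-projective and $p_G$ is an epi-coessential epimorphism.
   Context: A quiver is a quadruple $(V,E,\sigma,\tau)$ with $V,E$ sets and $\sigma,\tau : E \to V$ functions (source and target). A quiver homomorphism is a pair of functions on vertices and edges commuting with sources and targets; $\mathbf{Quiv}$ is the category of quivers, composition componentwise. A homomorphism is epic iff its vertex and edge maps are surjective. A quiver $P$ is epi-projective if for every epic $\phi : A\to B$ and every $\psi : P\to B$ there is $\gamma : P\to A$ with $\phi\circ\gamma=\psi$. An epic $\phi : G\to H$ is epi-coessential if for every homomorphism $\alpha : A\to G$, $\phi\circ\alpha$ epic implies $\alpha$ epic. An epi-projective cover of $G$ is an epi-projective quiver $P$ with an epi-coessential homomorphism $P\to G$. A vertex $v$ is independent if no edge has $v$ as source or target; $\mathrm{indep}(G)$ is the set of independent vertices. For a set $S$, $I(S)$ is the quiver with vertex set $S$ and no edges; $M(T)$ has vertex set $\{0,1\}\times T$, edge set $T$, source $t\mapsto(0,t)$, target $t\mapsto(1,t)$. The explosion is $X(G):=I(\mathrm{indep}(G))\amalg M(E(G))$ (disjoint union of quivers). The covering map $p_G : X(G)\to G$ is the unique homomorphism which on $I(\mathrm{indep}(G))$ sends each independent vertex $v$ to $v$, and on $M(E(G))$ is the identity on edges and sends $(0,e)\mapsto\sigma_G(e)$, $(1,e)\mapsto\tau_G(e)$. *)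

Set Implicit Arguments.

Record quiver := Quiver {
  qV : Type;
  qE : Type;
  qsrc : qE -> qV;
  qtgt : qE -> qV }.

Record qhom (G H : quiver) := QHom {
  hV : qV G -> qV H;
  hE : qE G -> qE H;
  hsrc : forall e, hV (qsrc G e) = qsrc H (hE e);
  htgt : forall e, hV (qtgt G e) = qtgt H (hE e) }.

Definition qcomp (A B C : quiver) (f : qhom B C) (g : qhom A B) : qhom A C.
Proof.
  refine (@QHom A C (fun v => hV f (hV g v)) (fun e => hE f (hE g e)) _ _).
  - intro e. rewrite (hsrc g), (hsrc f). reflexivity.
  - intro e. rewrite (htgt g), (htgt f). reflexivity.
Defined.

Definition qhom_eq (A B : quiver) (f g : qhom A B) : Prop :=
  (forall v, hV f v = hV g v) /\ (forall e, hE f e = hE g e).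

Definition epic (A B : quiver) (f : qhom A B) : Prop :=
  (forall w, exists v, hV f v = w) /\ (forall d, exists e, hE f e = d).

Definition epi_projective (P : quiver) : Prop :=
  forall (A B : quiver) (phi : qhom A B), epic phi ->
  forall psi : qhom P B, exists gamma : qhom P A, qhom_eq (qcomp phi gamma) psi.

Definition epi_coessential (G H : quiver) (phi : qhom G H) : Prop :=
  epic phi /\
  forall (A : quiver) (alpha : qhom A G), epic (qcomp phi alpha) -> epic alpha.

Definition epi_projective_cover (P G : quiver) (p : qhom P G) : Prop :=
  epi_projective P /\ epi_coessential p.

Definition independent (G : quiver) (v : qV G) : Prop :=
  forall e, qsrc G e <> v /\ qtgt G e <> v.

Definition indep (G : quiver) : Type := { v : qV G | independent G v }.

Definition Iq (S : Type) : quiver := @Quiver S Empty_set (fun e => match e with end)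
                                                         (fun e => match e with end).

(* M(T): vertices {0,1} x T (0 = false, 1 = true), edges T *)
Definition Mq (T : Type) : quiver := @Quiver (bool * T) T (fun t => (false, t)) (fun t => (true, t)).

Definition qsum (A B : quiver) : quiver :=
  @Quiver (qV A + qV B)%type (qE A + qE B)%type
    (fun e => match e with inl a => inl (qsrc A a) | inr b => inr (qsrc B b) end)
    (fun e => match e with inl a => inl (qtgt A a) | inr b => inr (qtgt B b) end).

Definition explosion (G : quiver) : quiver := qsum (Iq (indep G)) (Mq (qE G)).

Definition pG_V (G : quiver) (x : qV (explosion G)) : qV G :=
  match x with
  | inl v => proj1_sig v
  | inr (b, e) => if b then qtgt G e else qsrc G e
  end.

Definition pG_E (G : quiver) (x : qE (explosion G)) : qE G :=
  match x with
  | inl z => match z with end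
  | inr e => e
  end.

Definition covering_map (G : quiver) : qhom (explosion G) G.
Proof.
  refine (@QHom (explosion G) G (@pG_V G) (@pG_E G) _ _).
  - intros [z|e]; [destruct z | reflexivity].
  - intros [z|e]; [destruct z | reflexivity].
Defined.

(* Lifting along an epimorphism only requires choosing preimages: for I(S) of
   vertices, for M(T) of edges (the endpoints then come for free), and
   epi-projectivity is preserved by disjoint unions; hence X(G) is
   epi-projective.  The covering map is epic because every vertex is either
   independent or an endpoint of an edge.  It is epi-coessential because it is
   bijective on edges and the fibre over an independent vertex is a single
   vertex: a homomorphism into X(G) whose composite with p_G is epic hits every
   edge, hence every endpoint, and hits each independent vertex directly. *)
From Stdlib Require Import Classical IndefiniteDescription ProofIrrelevance.

Set Implicit Arguments.

Definition qinl (P Q : quiver) : qhom P (qsum P Q) :=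
  @QHom P (qsum P Q) inl inl (fun _ => eq_refl) (fun _ => eq_refl).

Definition qinr (P Q : quiver) : qhom Q (qsum P Q) :=
  @QHom Q (qsum P Q) inr inr (fun _ => eq_refl) (fun _ => eq_refl).

Definition qcopair (P Q C : quiver) (f : qhom P C) (g : qhom Q C) :
  qhom (qsum P Q) C.
Proof.
  refine (@QHom (qsum P Q) C
            (fun v => match v with inl x => hV f x | inr y => hV g y end)
            (fun e => match e with inl x => hE f x | inr y => hE g y end) _ _).
  - intros [e|e]; [apply (hsrc f) | apply (hsrc g)].
  - intros [e|e]; [apply (htgt f) | apply (htgt g)].
Defined.

Definition Iq_hom (S : Type) (A : quiver) (f : S -> qV A) : qhom (Iq S) A :=
  @QHom (Iq S) A f (fun e => match e with end)
    (fun e => match e with end) (fun e => match e with end).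

Definition Mq_hom (T : Type) (A : quiver) (f : T -> qE A) : qhom (Mq T) A.
Proof.
  refine (@QHom (Mq T) A
            (fun v => if fst v then qtgt A (f (snd v)) else qsrc A (f (snd v)))
            f _ _); reflexivity.
Defined.

Lemma epi_projective_qsum (P Q : quiver) :
  epi_projective P -> epi_projective Q -> epi_projective (qsum P Q).
Proof.
  intros HP HQ A B phi Hphi psi.
  destruct (HP A B phi Hphi (qcomp psi (qinl P Q))) as [gP [HPV HPE]].
  destruct (HQ A B phi Hphi (qcomp psi (qinr P Q))) as [gQ [HQV HQE]].
  exists (qcopair gP gQ); split.
  - intros [v|v]; [apply HPV | apply HQV].
  - intros [e|e]; [apply HPE | apply HQE].
Qed.

Lemma epi_projective_Iq (S : Type) : epi_projective (Iq S).
Proof.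
  intros A B phi [HV _] psi.
  destruct (functional_choice _ HV) as [sV HsV].
  exists (Iq_hom A (fun s => sV (hV psi s))); split.
  - intro s; apply HsV.
  - intros [].
Qed.

Lemma epi_projective_Mq (T : Type) : epi_projective (Mq T).
Proof.
  intros A B phi [_ HE] psi.
  destruct (functional_choice _ HE) as [sE HsE].
  exists (Mq_hom A (fun t => sE (hE psi t))); split.
  - intros [[|] t]; simpl.
    + rewrite (htgt phi), HsE; symmetry; apply (htgt psi t).
    + rewrite (hsrc phi), HsE; symmetry; apply (hsrc psi t).
  - intro t; apply HsE.
Qed.

Lemma epi_projective_explosion (G : quiver) : epi_projective (explosion G).
Proof.
  apply epi_projective_qsum; [apply epi_projective_Iq | apply epi_projective_Mq].
Qed.

Lemma not_independent (G : quiver) (v : qV G) :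
  ~ independent G v -> exists e, qsrc G e = v \/ qtgt G e = v.
Proof.
  intro Hv; apply not_all_ex_not in Hv as [e He].
  exists e; apply not_and_or in He as [Hs|Ht]; [left | right]; apply NNPP; assumption.
Qed.

Lemma epic_covering_map (G : quiver) : epic (covering_map G).
Proof.
  split.
  - intro w; destruct (classic (independent G w)) as [Hw|Hw].
    + exists (inl (exist _ w Hw)); reflexivity.
    + destruct (not_independent Hw) as [e [Hs|Ht]].
      * exists (inr (false, e)); exact Hs.
      * exists (inr (true, e)); exact Ht.
  - intro e; exists (inr e); reflexivity.
Qed.

Lemma inr_pG_E (G : quiver) (x : qE (explosion G)) : x = inr (pG_E x).
Proof. destruct x as [[]|e]; reflexivity. Qed.

Lemma pG_V_fibre_indep (G : quiver) (x : qV (explosion G)) (v : indep G) :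
  pG_V x = proj1_sig v -> x = inl v.
Proof.
  destruct v as [v Hv], x as [[w Hw]|[b e]]; simpl; intro Hx.
  - subst w; f_equal; apply subset_eq_compat; reflexivity.
  - destruct (Hv e); destruct b; contradiction.
Qed.

Lemma hV_hits_endpoints (A Q : quiver) (alpha : qhom A Q) :
  (forall d, exists e, hE alpha e = d) ->
  forall d, (exists a, hV alpha a = qsrc Q d) /\ (exists a, hV alpha a = qtgt Q d).
Proof.
  intros HE d; destruct (HE d) as [e He]; split.
  - exists (qsrc A e); rewrite (hsrc alpha), He; reflexivity.
  - exists (qtgt A e); rewrite (htgt alpha), He; reflexivity.
Qed.

Lemma covering_map_coessential (G : quiver) (A : quiver)
  (alpha : qhom A (explosion G)) :
  epic (qcomp (covering_map G) alpha) -> epic alpha.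
Proof.
  intros [HV HE].
  assert (HEa : forall d, exists e, hE alpha e = d).
  { intro d; rewrite (inr_pG_E d); destruct (HE (pG_E d)) as [e He].
    exists e; rewrite (inr_pG_E (hE alpha e)); simpl in He; rewrite He; reflexivity. }
  split; [|exact HEa].
  intros [v|[b d]].
  - destruct (HV (proj1_sig v)) as [a Ha].
    exists a; apply pG_V_fibre_indep; exact Ha.
  - destruct (hV_hits_endpoints alpha HEa (inr d)) as [Hs Ht].
    destruct b; [exact Ht | exact Hs].
Qed.

Theorem mainTheorem8 (G : quiver) :
  epi_projective_cover (covering_map G).
Proof.
  split; [apply epi_projective_explosion|].
  split; [apply epic_covering_map | apply covering_map_coessential].
Qed.
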